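(* Let $n\ge1$ be an integer and $s$ a real parameter. Let $A_n$ be the $n\times n$ matrix with $(A_n)_{i,i}=i$ for $1\le i\le n$, $(A_n)_{i,i-1}=i-1$ for $2\le i\le n$, and all other entries $0$; let $B_n$ be the $n\times n$ matrix with $(B_n)_{i,i}=2i$ for $1\le i\le n$, $(B_n)_{i,i-1}=i-1$ for $2\le i\le n$, $(B_n)_{i,i+1}=-(n-i)$ for $1\le i\le n-1$, and all other entries $0$. Then the characteristic polynomial of $C_n(s):=(n+1)A_n+sB_n$ is $$\chi(C_n(s);z)=\det(zI_n-C_n(s))=\prod_{k=1}^n\big(z-(s+k)(n+1)\big).$$ *)

(* Matrices are 0-indexed: row/column i : 'I_n corresponds to
   the paper's index i+1. *)
From mathcomp Require Import all_boot all_order all_algebra.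
From mathcomp Require Import reals.
Set Implicit Arguments. Unset Strict Implicit. Unset Printing Implicit Defensive.
Import Order.TTheory GRing.Theory Num.Theory.
Local Open Scope ring_scope.

Definition A_mx (R : ringType) (n : nat) : 'M[R]_n :=
  \matrix_(i < n, j < n)
    (if i == j :> nat then (i.+1)%:R
     else if i == j.+1 :> nat then (j.+1)%:R else 0).

Definition B_mx (R : ringType) (n : nat) : 'M[R]_n :=
  \matrix_(i < n, j < n)
    (if i == j :> nat then (2 * i.+1)%:R
     else if i == j.+1 :> nat then (j.+1)%:R
     else if j == i.+1 :> nat then - (n - i.+1)%:R else 0).

Definition C_mx (R : ringType) (n : nat) (s : R) : 'M[R]_n :=
  (n.+1)%:R *: A_mx R n + s *: B_mx R n.

From mathcomp Require Import all_boot all_order all_algebra.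
From mathcomp Require Import reals.
From mathcomp Require Import zify ring.
Set Implicit Arguments. Unset Strict Implicit. Unset Printing Implicit Defensive.
Import Order.TTheory GRing.Theory Num.Theory.
Local Open Scope ring_scope.

(* Conjugating by the lower unitriangular Pascal matrix P = ('C(i, j)) makes
   C_n(s) upper triangular.  Indeed P A_n = D P with D = diag(1, ..., n), since
   (j+1) ('C(i, j) + 'C(i, j+1)) = (i+1) 'C(i, j), and P B_n = U P with U upper
   bidiagonal with constant diagonal n+1, by the absorption identity
   (m+1) 'C(i, m+1) = (i-m) 'C(i, m).  So C_n(s) is similar to (n+1) D + s U,
   whose diagonal entries are (s + k)(n + 1). *)

Lemma big_ord1S_eq {R : Type} {idx : R} (op : Monoid.law idx) (F : nat -> R) n m :
  \big[op/idx]_(k < n | m == k.+1) F k = if (0 < m <= n)%N then F m.-1 else idx.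
Proof.
case: m => [|m]; first by rewrite big_pred0.
by rewrite (eq_bigl (fun k : 'I_n => k == m :> nat)) ?big_ord1_eq // => k; rewrite eq_sym.
Qed.

Lemma mul_bin_leftD n m : (m.+1 * 'C(n, m.+1) + m * 'C(n, m) = n * 'C(n, m))%N.
Proof.
rewrite mul_bin_left -mulnDl; have [le_mn | lt_nm] := leqP m n; first by rewrite subnK.
by rewrite bin_small ?muln0.
Qed.

Lemma subr_eq_sub (V : zmodType) (x y z t : V) : x + t = z + y -> x - y = z - t.
Proof. by move=> e; apply/eqP; rewrite subr_eq addrAC eq_sym subr_eq e. Qed.

Lemma char_poly_tr (R : comNzRingType) n (M : 'M[R]_n) : char_poly M^T = char_poly M.
Proof. by rewrite /char_poly -det_tr /char_poly_mx raddfB /= tr_scalar_mx map_trmx trmxK. Qed.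

Lemma char_poly_upper_trig (R : comNzRingType) n (M : 'M[R]_n) :
  is_trig_mx M^T -> char_poly M = \prod_(i < n) ('X - (M i i)%:P).
Proof.
by move=> /char_poly_trig; rewrite char_poly_tr => ->; apply: eq_bigr => i; rewrite mxE.
Qed.

Lemma char_poly_similar (R : idomainType) n (P M N : 'M[R]_n) :
  \det P \is a GRing.unit -> P *m M = N *m P -> char_poly M = char_poly N.
Proof.
move=> detP_unit PM_NP; set Q := map_mx polyC P.
have QM_NQ : Q *m char_poly_mx M = char_poly_mx N *m Q.
  by rewrite /char_poly_mx mulmxBr mulmxBl -!map_mxM PM_NP scalar_mxC.
have detQ_unit : \det Q \is a GRing.unit by rewrite det_map_mx rmorph_unit.
by apply: (mulrI detQ_unit); rewrite -det_mulmx QM_NQ det_mulmx mulrC.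
Qed.

Section Pascal.
Variables (R : comNzRingType) (n : nat).
Implicit Types (a b c : nat -> R).

(* [a] gives the diagonal, [b] the subdiagonal and [c] the superdiagonal, each
   indexed by the smaller of the row and column indices. *)
Definition tridiag_mx a b c : 'M[R]_n :=
  \matrix_(i, j)
    (if i == j :> nat then a i
     else if i == j.+1 :> nat then b j
     else if j == i.+1 :> nat then c i else 0).

Definition pascal_mx : 'M[R]_n := \matrix_(i, j) 'C(i, j)%:R.

Lemma det_pascal_mx : \det pascal_mx = 1.
Proof.
rewrite det_trig; last by apply/is_trig_mxP => i j lt_ij; rewrite mxE bin_small.
by rewrite big1 // => i _; rewrite mxE binn.
Qed.

Lemma tridiag_mxE a b c (i j : 'I_n) :
  tridiag_mx a b c i j =
    (if i == j :> nat then a i else 0) + (if i == j.+1 :> nat then b j else 0)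
    + (if j == i.+1 :> nat then c i else 0).
Proof.
rewrite mxE; have [-> | _] := eqVneq (i : nat) j.
  by rewrite !(ltn_eqF (ltnSn _)) !addr0.
have [-> | _] := eqVneq (i : nat) j.+1.
  by rewrite (ltn_eqF (leqW (ltnSn _))) add0r addr0.
by rewrite !add0r.
Qed.

Lemma tridiag_mx_upper_trig a c : is_trig_mx (tridiag_mx a (fun=> 0) c)^T.
Proof.
apply/is_trig_mxP => i j lt_ij.
by rewrite !mxE (gtn_eqF lt_ij) (ltn_eqF (leqW lt_ij)) /= if_same.
Qed.

Lemma pascal_mulmx_tridiag a b c (i j : 'I_n) :
  (pascal_mx *m tridiag_mx a b c) i j =
    'C(i, j)%:R * a j + 'C(i, j.+1)%:R * b j
    + (if (0 < j)%N then 'C(i, j.-1)%:R * c j.-1 else 0).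
Proof.
rewrite mxE.
under eq_bigr => k _ do rewrite tridiag_mxE mxE !mulrDr !(fun_if ( *%R _)) !mulr0.
rewrite !big_split /= -!big_mkcond.
rewrite (big_ord1_eq _ (fun k => 'C(i, k)%:R * a k)) (big_ord1_eq _ (fun k => 'C(i, k)%:R * b j)).
rewrite (big_ord1S_eq _ (fun k => 'C(i, k)%:R * c k)) ltn_ord (ltnW (ltn_ord j)) andbT.
case: ltnP => [//|le_n_Sj].
by rewrite (@bin_small i j.+1) ?mul0r // (leq_trans (ltn_ord i)).
Qed.

Lemma tridiag_mulmx_pascal a b c (i j : 'I_n) :
  (tridiag_mx a b c *m pascal_mx) i j =
    a i * 'C(i, j)%:R
    + (if (0 < i)%N then b i.-1 * 'C(i.-1, j)%:R else 0)
    + (if (i.+1 < n)%N then c i * 'C(i.+1, j)%:R else 0).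
Proof.
rewrite mxE.
under eq_bigr => k _
  do rewrite tridiag_mxE mxE !mulrDl !(fun_if ( *%R^~ _)) !mul0r (eq_sym (i : nat)).
rewrite !big_split /= -!big_mkcond.
rewrite (big_ord1_eq _ (fun k => a i * 'C(k, j)%:R)) (big_ord1_eq _ (fun k => c i * 'C(k, j)%:R)).
by rewrite (big_ord1S_eq _ (fun k => b k * 'C(k, j)%:R)) ltn_ord (ltnW (ltn_ord i)) andbT.
Qed.

Lemma A_mx_tridiag :
  A_mx R n = tridiag_mx (fun i => i.+1%:R) (fun j => j.+1%:R) (fun=> 0).
Proof. by apply/matrixP => i j; rewrite !mxE if_same. Qed.

Lemma B_mx_tridiag :
  B_mx R n =
    tridiag_mx (fun i => (2 * i.+1)%:R) (fun j => j.+1%:R) (fun i => - (n - i.+1)%:R).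
Proof. by []. Qed.

Lemma pascal_mulmx_A :
  pascal_mx *m A_mx R n = tridiag_mx (fun i => i.+1%:R) (fun=> 0) (fun=> 0) *m pascal_mx.
Proof.
apply/matrixP => i j; rewrite A_mx_tridiag pascal_mulmx_tridiag tridiag_mulmx_pascal.
rewrite !mul0r !mulr0 !if_same !addr0 -!natrM -natrD; congr _%:R.
by rewrite mul_bin_diag binS; lia.
Qed.

Lemma pascal_mulmx_B :
  pascal_mx *m B_mx R n =
    tridiag_mx (fun=> n.+1%:R) (fun=> 0) (fun i => - (n - i.+1)%:R) *m pascal_mx.
Proof.
apply/matrixP => i j; rewrite B_mx_tridiag pascal_mulmx_tridiag tridiag_mulmx_pascal.
rewrite mul0r if_same addr0.
have -> : (if (i.+1 < n)%N then - (n - i.+1)%:R * 'C(i.+1, j)%:R else 0) =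
          - (n - i.+1)%:R * 'C(i.+1, j)%:R :> R.
  case: ltnP => // le_n_Si.
  by rewrite (_ : n - i.+1 = 0)%N ?oppr0 ?mul0r //; apply/eqP; rewrite subn_eq0.
move: (ltn_ord i) (ltn_ord j); case: i j => [i _] [[|k] _] /= lt_in lt_jn.
  rewrite -oppr0 !mulNr; apply: subr_eq_sub; rewrite !bin0 bin1 !mulr1 !mul1r addr0 -!natrD.
  by congr _%:R; lia.
rewrite mulrN mulNr; apply: subr_eq_sub; rewrite -!natrM -!natrD; congr _%:R.
have := mul_bin_leftD i k; have := mul_bin_leftD i k.+1; rewrite binS; nia.
Qed.

Lemma pascal_mulmx_C s :
  pascal_mx *m C_mx n s =
    tridiag_mx (fun i => (s + i.+1%:R) * n.+1%:R) (fun=> 0) (fun i => - (s * (n - i.+1)%:R))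
    *m pascal_mx.
Proof.
rewrite /C_mx mulmxDr -!scalemxAr pascal_mulmx_A pascal_mulmx_B !scalemxAl -mulmxDl.
congr (_ *m _); apply/matrixP => i j; rewrite !mxE.
by do ![case: (_ == _) => /=]; ring.
Qed.

End Pascal.

Theorem lemmaA2 (R : realType) (n : nat) (s : R) :
  (0 < n)%N ->
  char_poly (@C_mx R n s) =
    \prod_(1 <= k < n.+1) ('X - ((s + k%:R) * (n.+1)%:R)%:P).
Proof.
(* The identity also holds for n = 0. *)
move=> _.
rewrite (char_poly_similar _ (pascal_mulmx_C n s)); last by rewrite det_pascal_mx unitr1.
rewrite char_poly_upper_trig ?tridiag_mx_upper_trig // big_add1 big_mkord.
by apply: eq_bigr => i _; rewrite mxE eqxx.
Qed.
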